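(* Let $A=(A^m(x_1,\dots,x_m))_{m\ge0}$ be a mould with $A^0=0$ such that $A^m(x_1,\dots,x_m)=A^{m-1}(x_1,\dots,x_{m-1})-A^{m-1}(x_2,\dots,x_m)$ for all $m\ge2$. Then $A$ is alternal.
   Context: A mould is a family $A=(A^m(x_1,\dots,x_m))_{m\ge0}$ with $A^m\in\mathbb{Q}((x_1,\dots,x_m))$ (fraction field of $\mathbb{Q}[[x_1,\dots,x_m]]$), extended linearly to formal linear combinations of words. The shuffle product of words is defined by $\emptyset\,\text{ш}\,\omega=\omega\,\text{ш}\,\emptyset=\omega$ and $a\omega\,\text{ш}\,b\eta=a(\omega\,\text{ш}\,b\eta)+b(a\omega\,\text{ш}\,\eta)$. A mould $A$ with $A^0=0$ is alternal if $A^{p+q}\bigl((x_1,\dots,x_p)\,\text{ш}\,(x_{p+1},\dots,x_{p+q})\bigr)=0$ for all $p,q\ge1$. *)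

From HB Require Import structures.
From mathcomp Require Import all_boot all_order all_algebra.
Set Implicit Arguments. Unset Strict Implicit. Unset Printing Implicit Defensive.
Import GRing.Theory.
Local Open Scope ring_scope.

(* A word in the variables x_0, x_1, x_2, ... is encoded as the sequence of
   the indices of its letters: [:: i1; ...; im] stands for (x_i1, ..., x_im). *)

(* Shuffle product of words, as a list (multiset) of words: a formal linear
   combination with nonnegative integer coefficients given by multiplicity.
   shuffle [::] t = [:: t],  shuffle s [::] = [:: s],
   shuffle (a::s) (b::t) = a.(shuffle s (b::t)) + b.(shuffle (a::s) t). *)
Fixpoint shuffle (s : seq nat) : seq nat -> seq (seq nat) :=
  match s with
  | [::] => fun t => [:: t]
  | a :: s' =>
      fix shuf_t (t : seq nat) : seq (seq nat) :=
        match t with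
        | [::] => [:: a :: s']
        | b :: t' => map (cons a) (shuffle s' t) ++ map (cons b) (shuf_t t')
        end
  end.

(* A mould with values in V, evaluated on words:
   A w = A^m (x_{w_1}, ..., x_{w_m}) with m = size w.
   Only words with pairwise distinct letters (injective renamings of the
   variables x_1..x_m) are relevant. *)
Definition mould (V : zmodType) := seq nat -> V.

Definition mould_lin (V : zmodType) (A : mould V) (ws : seq (seq nat)) : V :=
  \sum_(w <- ws) A w.

Definition alternal (V : zmodType) (A : mould V) : Prop :=
  A [::] = 0 /\
  forall p q : nat, (0 < p)%N -> (0 < q)%N ->
    mould_lin A (shuffle (iota 1 p) (iota p.+1 q)) = 0.

(* Every word w of a shuffle of two nonempty words u, v has length at least 2,
   so the hypothesis writes the sum of A over u ш v as the sum of A (droplast w)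
   minus the sum of A (behead w).  Deleting the last (first) letter of the words
   of u ш v yields (droplast u) ш v + u ш (droplast v), and likewise for behead.
   By induction on |u| + |v| the shuffles of nonempty shorter words have zero
   sum, so all these terms vanish except when u or v is a single letter; then
   droplast and behead of that letter are both the empty word and the two
   corresponding terms cancel. *)

From mathcomp Require Import all_boot all_order all_algebra.
From mathcomp Require Import zify.
Local Open Scope ring_scope.
Import GRing.Theory.

Arguments shuffle : simpl never.

Definition droplast {T} (w : seq T) := take (size w).-1 w.

Lemma droplast_seq1 T (a : T) : droplast [:: a] = [::].
Proof. by []. Qed.

Lemma droplast_cons (T : eqType) (a : T) w :
  w != [::] -> droplast (a :: w) = a :: droplast w.
Proof. by case: w. Qed.

Lemma size_droplast T (w : seq T) : size (droplast w) = (size w).-1.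
Proof. by rewrite size_take; case: w => //= x w; rewrite ltnSn. Qed.

Lemma droplast_subseq (T : eqType) (w : seq T) : subseq (droplast w) w.
Proof. exact: take_subseq. Qed.

Lemma shuffles0 (s : seq nat) : shuffle s [::] = [:: s].
Proof. by case: s. Qed.

Lemma shuffle_cons a s b t : shuffle (a :: s) (b :: t) =
  map (cons a) (shuffle s (b :: t)) ++ map (cons b) (shuffle (a :: s) t).
Proof. by []. Qed.

Lemma mem_shuffle_perm [s t w] : w \in shuffle s t -> perm_eq w (s ++ t).
Proof.
elim: s t w => [|a s IHs] t w; first by rewrite inE => /eqP->.
elim: t w => [|b t IHt] w; first by rewrite shuffles0 inE cats0 => /eqP->.
rewrite shuffle_cons mem_cat => /orP[] /mapP[w' w'_in ->].
  by rewrite perm_cons IHs.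
by rewrite perm_sym (perm_catCA (a :: s) [:: b] t) /= perm_cons perm_sym IHt.
Qed.

Lemma mem_shuffle_size [s t w] : w \in shuffle s t -> size w = (size s + size t)%N.
Proof. by move/mem_shuffle_perm/perm_size; rewrite size_cat. Qed.

Section MouldLin.
Variable V : zmodType.
Implicit Type B : mould V.

Lemma mould_lin_shuffle0s B t : mould_lin B (shuffle [::] t) = B t.
Proof. exact: big_seq1. Qed.

Lemma mould_lin_shuffles0 B s : mould_lin B (shuffle s [::]) = B s.
Proof. by rewrite shuffles0; apply: big_seq1. Qed.

Lemma mould_lin_shuffle_cons B a s b t :
  mould_lin B (shuffle (a :: s) (b :: t)) =
  mould_lin (B \o cons a) (shuffle s (b :: t)) +
  mould_lin (B \o cons b) (shuffle (a :: s) t).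
Proof. by rewrite /mould_lin shuffle_cons big_cat !big_map. Qed.

Lemma mould_lin_shuffle_droplastl B a s b t :
  mould_lin B (shuffle (droplast (a :: s)) (b :: t)) =
  mould_lin (B \o cons a) (shuffle (droplast s) (b :: t)) *+ (s != [::]) +
  mould_lin (B \o cons b) (shuffle (droplast (a :: s)) t).
Proof.
case: s => [|x s]; last by rewrite droplast_cons // mould_lin_shuffle_cons.
by rewrite droplast_seq1 add0r !mould_lin_shuffle0s.
Qed.

Lemma mould_lin_shuffle_droplastr B a s b t :
  mould_lin B (shuffle (a :: s) (droplast (b :: t))) =
  mould_lin (B \o cons a) (shuffle s (droplast (b :: t))) +
  mould_lin (B \o cons b) (shuffle (a :: s) (droplast t)) *+ (t != [::]).
Proof.
case: t => [|y t]; last by rewrite droplast_cons // mould_lin_shuffle_cons.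
by rewrite droplast_seq1 addr0 !mould_lin_shuffles0.
Qed.

Lemma mould_lin_droplast_cons B a s t :
  s ++ t != [::] ->
  mould_lin (B \o droplast \o cons a) (shuffle s t) =
  mould_lin (B \o cons a \o droplast) (shuffle s t).
Proof.
move=> st_neq0; apply: eq_big_seq => w /mem_shuffle_size w_size /=.
rewrite droplast_cons //; apply: contraNneq st_neq0 => w0.
by rewrite -size_eq0 size_cat -w_size w0.
Qed.

(* The weights [*+ (_ != [::])] drop the term of an empty factor; allowing
   empty factors is what makes the induction go through. *)
Lemma mould_lin_shuffle_droplast B s t :
  s ++ t != [::] ->
  mould_lin (B \o droplast) (shuffle s t) =
  mould_lin B (shuffle (droplast s) t) *+ (s != [::]) +
  mould_lin B (shuffle s (droplast t)) *+ (t != [::]).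
Proof.
elim: s t B => [|a s IHs] t B.
  by case: t => // b t _; rewrite !mould_lin_shuffle0s add0r mulr1n.
elim: t B => [|b t IHt] B _; first by rewrite !mould_lin_shuffles0 addr0 mulr1n.
have sbt_neq0 : s ++ b :: t != [::] by case: s {IHs IHt}.
rewrite mould_lin_shuffle_cons mould_lin_shuffle_droplastl.
rewrite mould_lin_shuffle_droplastr !mould_lin_droplast_cons // IHs // IHt //.
by rewrite /= !mulr1n addrACA.
Qed.

End MouldLin.

Lemma uniq_cat_subseq (T : eqType) (u v u' v' : seq T) :
  subseq u' u -> subseq v' v -> uniq (u ++ v) -> uniq (u' ++ v').
Proof. by move=> su sv; apply: subseq_uniq; apply: cat_subseq. Qed.

Section DifferenceMould.
Variables (V : zmodType) (A : mould V).
Hypothesis A_diff : forall w : seq nat, uniq w -> (2 <= size w)%N ->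
  A w = A (droplast w) - A (behead w).

Lemma mould_lin_shuffle_eq0 u v : u != [::] -> v != [::] -> uniq (u ++ v) ->
  mould_lin A (shuffle u v) = 0.
Proof.
move: {2}(size u + size v)%N (leqnn (size u + size v)) => n.
elim: n u v => [|n IHn] [|a s] [|b t] // size_le _ _ uniq_uv.
rewrite /= in size_le.
have shorter_eq0 u' v' : (size u' + size v' <= n)%N -> u' != [::] -> v' != [::] ->
    subseq u' (a :: s) -> subseq v' (b :: t) -> mould_lin A (shuffle u' v') = 0.
  by move=> *; apply: IHn => //; apply: uniq_cat_subseq uniq_uv.
have dropl : mould_lin A (shuffle (droplast (a :: s)) (b :: t)) =
    mould_lin A (shuffle s (b :: t)).
  have [->|s_neq0] := eqVneq s [::]; first by rewrite droplast_seq1.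
  by rewrite (shorter_eq0 (droplast _)) ?(shorter_eq0 s) ?size_droplast
    ?droplast_subseq ?subseq_cons ?subseq_refl ?droplast_cons //=; lia.
have dropr : mould_lin A (shuffle (a :: s) (droplast (b :: t))) =
    mould_lin A (shuffle (a :: s) t).
  have [->|t_neq0] := eqVneq t [::]; first by rewrite droplast_seq1.
  by rewrite (shorter_eq0 _ (droplast _)) ?(shorter_eq0 _ t) ?size_droplast
    ?droplast_subseq ?subseq_cons ?subseq_refl ?droplast_cons //=; lia.
have split_diff : mould_lin A (shuffle (a :: s) (b :: t)) =
    mould_lin (A \o droplast) (shuffle (a :: s) (b :: t)) -
    mould_lin (A \o behead) (shuffle (a :: s) (b :: t)).
  rewrite /mould_lin -sumrB; apply: eq_big_seq => w w_in; apply: A_diff.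
    by rewrite (perm_uniq (mem_shuffle_perm w_in)).
  by rewrite (mem_shuffle_size w_in) /= addnS.
rewrite split_diff mould_lin_shuffle_droplast // mould_lin_shuffle_cons /= !mulr1n.
by rewrite dropl dropr subrr.
Qed.

End DifferenceMould.

Theorem lemma1p29 (V : zmodType) (A : mould V) :
  A [::] = 0 ->
  (forall w : seq nat, uniq w -> (2 <= size w)%N ->
     A w = A (take (size w).-1 w) - A (behead w)) ->
  alternal A.
Proof.
move=> A0 A_diff; split=> // p q p_gt0 q_gt0.
have iota_neq0 m k : (0 < k)%N -> iota m k != [::] by case: k.
apply: mould_lin_shuffle_eq0; rewrite ?iota_neq0 //.
by rewrite -[p.+1]/(1 + p)%N -iotaD iota_uniq.
Qed.
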